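(* Let $L$ be a positive integer, let $r$ be a positive integer with $\mathrm{degree}(r) < L$, and let $p = 2^L \oplus r$. For every positive integer $w$, the degree of $w \star 2^L \bmod p$ is at most $\mathrm{degree}(w) + \mathrm{degree}(r)$. Moreover, if $\mathrm{degree}(w) + \mathrm{degree}(r) < L$, then the degree of $w \star 2^L \bmod p$ is exactly $\mathrm{degree}(w) + \mathrm{degree}(r)$.
   Context: All operations are carry-less. For nonnegative integers $a,b$, with $a_i$ the $i$-th least significant bit of $a$, the carry-less product $a \star b$ is the integer whose $i$-th bit is $\bigoplus_{k=0}^{i} a_{i-k} b_k$; $\oplus$ is bitwise XOR. For a positive integer $x$, $\mathrm{degree}(x)$ is the index (starting at $0$) of its most significant nonzero bit; by convention $\mathrm{degree}(0) = -\infty$. For integers $a$ and $b \neq 0$ there are unique integers $\alpha,\beta$ with $a = \alpha \star b \oplus \beta$ and $\beta = 0$ or $\mathrm{degree}(\beta) < \mathrm{degree}(b)$; one writes $a \div b = \alpha$ and $a \bmod b = \beta$. Precedence: $\star$, $\bmod$, $\div$ first, then $\oplus$. *)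

(* carry-less arithmetic on natural numbers (GF(2)[x] encoded in bits). *)
From Stdlib Require Import Arith List Lia Bool.
Import ListNotations.
Open Scope bool_scope.
Open Scope nat_scope.

Definition xorl (l : list bool) : bool := fold_right xorb false l.

Definition bit (a i : nat) : bool := Nat.testbit a i.

Definition clmul_bit (a b i : nat) : bool :=
  xorl (map (fun k => andb (bit a (i - k)) (bit b k)) (seq 0 (S i))).

(* a ⋆ b : the integer whose i-th bit is clmul_bit a b i.  Bits of index
   >= a + b are zero (since a < 2^a, b < 2^b), so summing i < a + b + 1 is exact. *)
Definition clmul (a b : nat) : nat :=
  fold_right Nat.add 0
    (map (fun i => if clmul_bit a b i then 2 ^ i else 0) (seq 0 (a + b + 1))).

Definition clxor (a b : nat) : nat := Nat.lxor a b.

(* degree: index of the most significant nonzero bit; degree 0 = -oo (None) *)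
Definition degree (x : nat) : option nat :=
  match x with 0 => None | S _ => Some (Nat.log2 x) end.

Definition deg_le (x n : nat) : Prop :=
  match degree x with None => True | Some d => d <= n end.

(* carry-less remainder by long division: while degree a >= degree b,
   replace a by a ⊕ (b shifted by degree a - degree b).  The fuel a + 1 suffices
   since each step strictly lowers the degree. *)
Fixpoint clmod_aux (fuel a b : nat) : nat :=
  match fuel with
  | 0 => a
  | S f =>
      if (a =? 0) || (Nat.log2 a <? Nat.log2 b) then a
      else clmod_aux f (Nat.lxor a (Nat.shiftl b (Nat.log2 a - Nat.log2 b))) b
  end.

(* a mod b for b <> 0: the unique beta with a = alpha ⋆ b ⊕ beta, beta = 0 or degree beta < degree b *)
Definition clmod (a b : nat) : nat := clmod_aux (S a) a b.

(* Modulo p = x^L + r we have x^L = r, so w x^L reduces to w r, of degree deg w + deg r.  When that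
   degree is below L the long division, which clears the bits of w one at a time from the top,
   never disturbs the leading bit of the accumulated low part, and this bit survives to the end. *)

From Stdlib Require Import Arith List Lia Bool.

Lemma lt_pow2_testbit_iff a k : a < 2 ^ k <-> forall i, k <= i -> Nat.testbit a i = false.
Proof.
  split.
  - intros Ha i Hi. destruct (Nat.eq_dec a 0) as [->|Ha0]; [apply Nat.bits_0|].
    apply Nat.bits_above_log2. apply Nat.log2_lt_pow2 in Ha; lia.
  - intros Hbits. replace a with (a mod 2 ^ k).
    + apply Nat.mod_upper_bound, Nat.pow_nonzero; lia.
    + apply Nat.bits_inj; intro i. destruct (Nat.lt_ge_cases i k).
      * now rewrite Nat.mod_pow2_bits_low.
      * now rewrite Nat.mod_pow2_bits_high, Hbits.
Qed.

Lemma lxor_lt_pow2 a b k : a < 2 ^ k -> b < 2 ^ k -> Nat.lxor a b < 2 ^ k.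
Proof.
  rewrite !lt_pow2_testbit_iff. intros Ha Hb i Hi.
  now rewrite Nat.lxor_spec, Ha, Hb.
Qed.

Lemma add_mul_pow2_lxor h c k : c < 2 ^ k -> h * 2 ^ k + c = Nat.lxor (h * 2 ^ k) c.
Proof.
  rewrite lt_pow2_testbit_iff. intro Hc.
  apply Nat.add_nocarry_lxor, Nat.bits_inj; intro i.
  rewrite Nat.land_spec, Nat.bits_0. destruct (Nat.lt_ge_cases i k).
  - now rewrite Nat.mul_pow2_bits_low.
  - now rewrite Hc, andb_false_r.
Qed.

Lemma lxor_mul_pow2_add h c h' c' k : c < 2 ^ k -> c' < 2 ^ k ->
  Nat.lxor (h * 2 ^ k + c) (h' * 2 ^ k + c') = Nat.lxor h h' * 2 ^ k + Nat.lxor c c'.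
Proof.
  intros Hc Hc'.
  rewrite !add_mul_pow2_lxor by auto using lxor_lt_pow2.
  apply Nat.bits_inj; intro i. rewrite !Nat.lxor_spec.
  destruct (Nat.lt_ge_cases i k).
  - rewrite !Nat.mul_pow2_bits_low by auto. now destruct (Nat.testbit c i).
  - rewrite !Nat.mul_pow2_bits_high, Nat.lxor_spec by auto.
    destruct (Nat.testbit h (i - k)), (Nat.testbit h' (i - k)),
      (Nat.testbit c i), (Nat.testbit c' i); reflexivity.
Qed.

Lemma lxor_pow2_lt c k : c < 2 ^ k -> Nat.lxor (2 ^ k) c = 2 ^ k + c.
Proof. intro Hc. rewrite <- (Nat.mul_1_l (2 ^ k)). symmetry. now apply add_mul_pow2_lxor. Qed.

Lemma lxor_pow2_log2 q : 0 < q -> Nat.lxor q (2 ^ Nat.log2 q) = q - 2 ^ Nat.log2 q.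
Proof.
  intro Hq. pose proof (Nat.log2_spec q Hq) as [Hlo Hhi]. rewrite Nat.pow_succ_r' in Hhi.
  set (d := Nat.log2 q) in *.
  assert (Hd : 0 < 2 ^ d) by (apply Nat.neq_0_lt_0, Nat.pow_nonzero; lia).
  pose proof (lxor_mul_pow2_add 1 (q - 2 ^ d) 1 0 d ltac:(lia) ltac:(lia)) as H.
  rewrite Nat.lxor_nilpotent, Nat.lxor_0_r in H.
  replace (1 * 2 ^ d + (q - 2 ^ d)) with q in H by lia.
  replace (1 * 2 ^ d + 0) with (2 ^ d) in H by lia. rewrite H. lia.
Qed.

Lemma degree_Some x k : degree x = Some k <-> 0 < x /\ Nat.log2 x = k.
Proof. destruct x; simpl; split; intuition congruence || lia. Qed.

Lemma degree_lxor_of_lt a b k : degree a = Some k -> b < 2 ^ k -> degree (Nat.lxor a b) = Some k.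
Proof.
  rewrite !degree_Some, lt_pow2_testbit_iff. intros [Ha Hk] Hb.
  assert (Hbit : Nat.testbit (Nat.lxor a b) k = true).
  { rewrite Nat.lxor_spec, Hb, <- Hk, Nat.bit_log2 by lia. reflexivity. }
  split.
  - destruct (Nat.lxor a b); [now rewrite Nat.bits_0 in Hbit | lia].
  - apply Nat.log2_bits_unique; auto. intros m Hm.
    rewrite Nat.lxor_spec, Hb, Nat.bits_above_log2 by lia. reflexivity.
Qed.

Lemma lxor_lt_pow2_log2 a b : 0 < a -> 0 < b -> Nat.log2 a = Nat.log2 b ->
  Nat.lxor a b < 2 ^ Nat.log2 a.
Proof.
  intros Ha Hb Hab. apply lt_pow2_testbit_iff. intros i Hi. rewrite Nat.lxor_spec.
  destruct (Nat.eq_dec i (Nat.log2 a)) as [->|Hne].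
  - rewrite Hab at 2. rewrite !Nat.bit_log2 by lia. reflexivity.
  - rewrite !Nat.bits_above_log2 by lia. reflexivity.
Qed.

Lemma log2_mul_pow2_add q c k : 0 < q -> c < 2 ^ k -> Nat.log2 (q * 2 ^ k + c) = Nat.log2 q + k.
Proof.
  intros Hq Hc.
  assert (Hdeg : degree (q * 2 ^ k) = Some (k + Nat.log2 q)).
  { apply degree_Some. split; [|apply Nat.log2_mul_pow2; lia].
    apply Nat.mul_pos_pos; auto. apply Nat.neq_0_lt_0, Nat.pow_nonzero; lia. }
  assert (Hlt : c < 2 ^ (k + Nat.log2 q)).
  { apply Nat.lt_le_trans with (2 ^ k); auto. apply Nat.pow_le_mono_r; lia. }
  rewrite add_mul_pow2_lxor by auto.
  apply (degree_lxor_of_lt _ c), degree_Some in Hdeg; auto. lia.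
Qed.

Lemma xorl_app l1 l2 : xorl (l1 ++ l2) = xorb (xorl l1) (xorl l2).
Proof. induction l1 as [|b l1 IH]; simpl; [reflexivity|]. now rewrite IH, xorb_assoc. Qed.

Lemma xorl_map_eqb (f : nat -> bool) m n :
  xorl (map (fun k => f k && (m =? k)) (seq 0 n)) = (m <? n) && f m.
Proof.
  induction n as [|n IH]; [reflexivity|].
  rewrite seq_S, map_app, xorl_app, IH. simpl.
  destruct (Nat.lt_trichotomy m n) as [Hlt|[<-|Hgt]].
  - replace (m =? n) with false by (symmetry; apply Nat.eqb_neq; lia).
    replace (m <? n) with true by (symmetry; apply Nat.ltb_lt; lia).
    replace (m <? S n) with true by (symmetry; apply Nat.ltb_lt; lia).
    now destruct (f m), (f n).
  - rewrite Nat.eqb_refl, Nat.ltb_irrefl.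
    replace (m <? S m) with true by (symmetry; apply Nat.ltb_lt; lia).
    now destruct (f m).
  - replace (m =? n) with false by (symmetry; apply Nat.eqb_neq; lia).
    replace (m <? n) with false by (symmetry; apply Nat.ltb_ge; lia).
    replace (m <? S n) with false by (symmetry; apply Nat.ltb_ge; lia).
    now destruct (f n).
Qed.

Lemma clmul_bit_pow2_r a m i : clmul_bit a (2 ^ m) i = Nat.testbit (a * 2 ^ m) i.
Proof.
  unfold clmul_bit, bit.
  rewrite (map_ext _ (fun k => Nat.testbit a (i - k) && (m =? k)))
    by (intro k; now rewrite Nat.pow2_bits_eqb).
  rewrite xorl_map_eqb. destruct (Nat.lt_ge_cases i m).
  - rewrite Nat.mul_pow2_bits_low by auto.
    replace (m <? S i) with false by (symmetry; apply Nat.ltb_ge; lia). reflexivity.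
  - rewrite Nat.mul_pow2_bits_high by auto.
    replace (m <? S i) with true by (symmetry; apply Nat.ltb_lt; lia). reflexivity.
Qed.

Lemma list_sum_bits x n :
  list_sum (map (fun i => if Nat.testbit x i then 2 ^ i else 0) (seq 0 n)) = x mod 2 ^ n.
Proof.
  induction n as [|n IH]; [reflexivity|].
  rewrite seq_S, map_app, list_sum_app, IH, Nat.pow_succ_r, Nat.mul_comm, Nat.Div0.mod_mul_r by lia.
  simpl. pose proof (Nat.testbit_spec' x n).
  destruct (Nat.testbit x n); simpl in *; lia.
Qed.

Lemma clmul_pow2_r a m : clmul a (2 ^ m) = a * 2 ^ m.
Proof.
  unfold clmul. change (fold_right Nat.add 0 ?l) with (list_sum l).
  rewrite (map_ext _ (fun i => if Nat.testbit (a * 2 ^ m) i then 2 ^ i else 0))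
    by (intro i; now rewrite clmul_bit_pow2_r).
  rewrite list_sum_bits. apply Nat.mod_small.
  pose proof (Nat.pow_gt_lin_r 2 a ltac:(lia)).
  pose proof (Nat.pow_gt_lin_r 2 (2 ^ m) ltac:(lia)).
  rewrite !Nat.pow_add_r, Nat.pow_1_r.
  assert (a * 2 ^ m <= 2 ^ a * 2 ^ 2 ^ m) by (apply Nat.mul_le_mono; lia). nia.
Qed.

Lemma clmod_aux_S_low f a b : Nat.log2 a < Nat.log2 b -> clmod_aux (S f) a b = a.
Proof.
  intro H. simpl. apply Nat.ltb_lt in H. rewrite H, orb_true_r. reflexivity.
Qed.

Lemma clmod_aux_S_high f a b : 0 < a -> Nat.log2 b <= Nat.log2 a ->
  clmod_aux (S f) a b = clmod_aux f (Nat.lxor a (Nat.shiftl b (Nat.log2 a - Nat.log2 b))) b.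
Proof.
  intros Ha Hab. simpl.
  replace (a =? 0) with false by (symmetry; apply Nat.eqb_neq; lia).
  replace (Nat.log2 a <? Nat.log2 b) with false by (symmetry; apply Nat.ltb_ge; lia).
  reflexivity.
Qed.

(* Each division step lowers the dividend below [2 ^ log2 a], so fuel [f > a] suffices. *)
Lemma clmod_aux_reduced f a b : 0 < b -> a < f ->
  clmod_aux f a b = 0 \/ Nat.log2 (clmod_aux f a b) < Nat.log2 b.
Proof.
  revert a. induction f as [|f IH]; intros a Hb Ha; [lia|].
  destruct (Nat.eq_dec a 0) as [->|Ha0]; [now left|].
  destruct (Nat.lt_ge_cases (Nat.log2 a) (Nat.log2 b)) as [Hlt|Hge].
  - right. now rewrite clmod_aux_S_low.
  - rewrite clmod_aux_S_high by lia. apply IH; auto.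
    assert (Hs : 0 < Nat.shiftl b (Nat.log2 a - Nat.log2 b)).
    { rewrite Nat.shiftl_mul_pow2. apply Nat.mul_pos_pos; auto.
      apply Nat.neq_0_lt_0, Nat.pow_nonzero; lia. }
    pose proof (Nat.log2_spec a ltac:(lia)).
    pose proof (lxor_lt_pow2_log2 a _ ltac:(lia) Hs) as Hlx.
    rewrite Nat.log2_shiftl in Hlx by lia. specialize (Hlx ltac:(lia)). lia.
Qed.

Section ReductionModulo.

Variables L r : nat.
Hypothesis r_pos : 0 < r.
Hypothesis r_lt : r < 2 ^ L.

Lemma log2_modulus : Nat.log2 (2 ^ L + r) = L.
Proof. rewrite <- (Nat.mul_1_l (2 ^ L)), log2_mul_pow2_add; auto. Qed.

(* Modulo [x ^ L + r] we have [x ^ (L + d) = x ^ d r]: the leading bit of the high part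
   reappears in the low part as [r * 2 ^ d]. *)
Lemma clmod_aux_step f q c : 0 < q -> c < 2 ^ L -> r * 2 ^ Nat.log2 q < 2 ^ L ->
  clmod_aux (S f) (q * 2 ^ L + c) (2 ^ L + r) =
  clmod_aux f ((q - 2 ^ Nat.log2 q) * 2 ^ L + Nat.lxor c (r * 2 ^ Nat.log2 q)) (2 ^ L + r).
Proof.
  intros Hq Hc Hr.
  assert (Hlog : Nat.log2 (q * 2 ^ L + c) = Nat.log2 q + L) by now apply log2_mul_pow2_add.
  rewrite clmod_aux_S_high, Hlog, log2_modulus, Nat.shiftl_mul_pow2
    by (rewrite ?Hlog, ?log2_modulus; nia).
  replace (Nat.log2 q + L - L) with (Nat.log2 q) by lia.
  replace ((2 ^ L + r) * 2 ^ Nat.log2 q) with (2 ^ Nat.log2 q * 2 ^ L + r * 2 ^ Nat.log2 q) by ring.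
  now rewrite lxor_mul_pow2_add, lxor_pow2_log2.
Qed.

(* While the high part stays below [2 ^ n], the added terms [r * 2 ^ d] have degree
   below [log2 r + n], so the leading bit of the low part never changes. *)
Lemma clmod_aux_degree_invariant n f q c : Nat.log2 r + n < L -> q < 2 ^ n -> q < f ->
  degree c = Some (Nat.log2 r + n) ->
  degree (clmod_aux f (q * 2 ^ L + c) (2 ^ L + r)) = Some (Nat.log2 r + n).
Proof.
  intro HK. revert q c. induction f as [|f IH]; intros q c Hq Hf Hc; [lia|].
  pose proof Hc as [Hc0 Hlogc]%degree_Some.
  assert (HcL : c < 2 ^ L).
  { pose proof (Nat.log2_spec c Hc0) as [_ Hhi].
    apply Nat.lt_le_trans with (2 ^ S (Nat.log2 c)); auto. apply Nat.pow_le_mono_r; lia. }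
  destruct (Nat.eq_dec q 0) as [->|Hq0].
  - rewrite clmod_aux_S_low; auto. rewrite log2_modulus. simpl. lia.
  - set (d := Nat.log2 q).
    assert (Hd : d < n) by (apply Nat.log2_lt_pow2; lia).
    assert (Hrd : r * 2 ^ d < 2 ^ (Nat.log2 r + n)).
    { apply Nat.log2_lt_pow2.
      - apply Nat.mul_pos_pos; auto. apply Nat.neq_0_lt_0, Nat.pow_nonzero; lia.
      - rewrite Nat.log2_mul_pow2; lia. }
    assert (HrL : r * 2 ^ d < 2 ^ L).
    { apply Nat.lt_le_trans with (2 ^ (Nat.log2 r + n)); auto. apply Nat.pow_le_mono_r; lia. }
    pose proof (Nat.log2_spec q ltac:(lia)) as [Hqlo Hqhi]. fold d in Hqlo, Hqhi.
    rewrite clmod_aux_step by (auto; lia). fold d.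
    apply IH.
    + rewrite Nat.pow_succ_r' in Hqhi. apply Nat.lt_le_trans with (2 ^ d); [lia|].
      apply Nat.pow_le_mono_r; lia.
    + pose proof (Nat.pow_nonzero 2 d). lia.
    + now apply degree_lxor_of_lt.
Qed.

End ReductionModulo.

Theorem lemma8 (L r : nat) (hL : 0 < L) (hr : 0 < r) (hdr : Nat.log2 r < L) :
  let p := clxor (2 ^ L) r in
  forall w : nat, 0 < w ->
    deg_le (clmod (clmul w (2 ^ L)) p) (Nat.log2 w + Nat.log2 r) /\
    (Nat.log2 w + Nat.log2 r < L ->
       degree (clmod (clmul w (2 ^ L)) p) = Some (Nat.log2 w + Nat.log2 r)).
Proof.
  intros p w Hw.
  assert (HrL : r < 2 ^ L) by (apply Nat.log2_lt_pow2; lia).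
  assert (Hp : p = 2 ^ L + r) by (apply lxor_pow2_lt; auto).
  assert (HwL : w <= w * 2 ^ L) by (pose proof (Nat.pow_gt_lin_r 2 L); nia).
  unfold clmod. rewrite Hp, clmul_pow2_r.
  destruct (Nat.lt_ge_cases (Nat.log2 w + Nat.log2 r) L) as [HK|HK].
  - assert (Hdeg : degree (clmod_aux (S (w * 2 ^ L)) (w * 2 ^ L) (2 ^ L + r))
                   = Some (Nat.log2 w + Nat.log2 r)).
    { pose proof (Nat.log2_spec w Hw) as [Hlo Hhi]. rewrite Nat.pow_succ_r' in Hhi.
      assert (Hrw : degree (r * 2 ^ Nat.log2 w) = Some (Nat.log2 r + Nat.log2 w)).
      { apply degree_Some. split; [nia | rewrite Nat.log2_mul_pow2; lia]. }
      assert (Hrw_lt : r * 2 ^ Nat.log2 w < 2 ^ L).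
      { apply Nat.log2_lt_pow2; [nia|]. rewrite Nat.log2_mul_pow2; lia. }
      rewrite <- (Nat.add_0_r (w * 2 ^ L)), clmod_aux_step, Nat.lxor_0_l by (auto; lia).
      rewrite (Nat.add_comm (Nat.log2 w)). apply clmod_aux_degree_invariant; auto; lia. }
    unfold deg_le. rewrite Hdeg. auto.
  - pose proof (clmod_aux_reduced (S (w * 2 ^ L)) (w * 2 ^ L) (2 ^ L + r) ltac:(lia) ltac:(lia)).
    rewrite log2_modulus in H by auto.
    unfold deg_le, degree. destruct (clmod_aux _ _ _); lia.
Qed.
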